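(* Fix $L\ge1$, rates $a_1,\ldots,a_L>0$, $\alpha,\beta>0$ with $\alpha a_i<1$ for all $i$, an $L$-particle configuration $\vec{\mathsf{x}}$, and $m\in\{1,\ldots,L\}$. With $\vec{\mathsf{y}}$, $\vec{\mathsf{x}}'$, $\mathsf{y}^{\dagger}_m$ and $\vec{\mathsf{y}}^{\,BG}$ constructed as described in the context, conditionally on $\vec{\mathsf{x}}$ the joint distribution of $(\mathsf{y}_{m-1},\mathsf{y}^{\dagger}_m)$ is the same as the joint distribution of $(\mathsf{y}_{m-1},\mathsf{y}^{BG}_m)$.
   Context: Fix $q\in(0,1)$; $(z;q)_k=\prod_{i=0}^{k-1}(1-zq^i)$. For $\gamma\in(0,1)$ and $m\in\mathbb{Z}_{\ge0}$ let $\mathbf{p}_{m,\gamma}(j)=\gamma^j(\gamma;q)_{m-j}\frac{(q;q)_m}{(q;q)_j(q;q)_{m-j}}$, $0\le j\le m$, and $\mathbf{p}_{+\infty,\gamma}(j)=\gamma^j(\gamma;q)_\infty/(q;q)_j$, $j\ge0$ (probability distributions). Configurations: $\vec{\mathsf{x}}=(\mathsf{x}_1>\ldots>\mathsf{x}_L)$ in $\mathbb{Z}$, with the convention $\mathsf{x}_0=+\infty$. Geometric $q$-TASEP move $\mathbf{G}_\alpha$ (rates $a_i$): each particle $i$ independently jumps to the right by $j$ with probability $\mathbf{p}_{\mathsf{x}_{i-1}-\mathsf{x}_i-1,\,a_i\alpha}(j)$. Bernoulli $q$-TASEP move $\mathbf{B}_\beta$: sequentially for $i=1,\ldots,L$,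 particle $i$ jumps right by one with probability $a_i\beta/(1+a_i\beta)$ if $i=1$ or if particle $i-1$ has jumped in this move, and with probability $(1-q^{\mathsf{x}_{i-1}-\mathsf{x}_i-1})a_i\beta/(1+a_i\beta)$ otherwise (gaps measured before the move); else it stays. Vertex weights $\mathsf{L}_{u,a,\nu}(i_1,j_1;i_2,j_2)$, $i_1,i_2\in\mathbb{Z}_{\ge0}$, $j_1,j_2\in\{0,1\}$, vanish unless $i_1+j_1=i_2+j_2$, and for $g\in\mathbb{Z}_{\ge0}$: $\mathsf{L}(g,0;g,0)=\frac{1-auq^g}{1-au}$, $\mathsf{L}(g,0;g-1,1)=\frac{-au(1-q^g)}{1-au}$, $\mathsf{L}(g,1;g,1)=\frac{\nu q^g-au}{1-au}$, $\mathsf{L}(g,1;g+1,0)=\frac{1-\nu q^g}{1-au}$. Construction: given $\vec{\mathsf{x}}$, let $\vec{\mathsf{y}}$ be obtained by applying $\mathbf{B}_\beta$ and $\vec{\mathsf{x}}'$ by applying $\mathbf{G}_\alpha$, with independent randomness. Given $\mathsf{x}_{m-1},\mathsf{y}_{m-1},\mathsf{x}'_m$, set $i_1=\mathsf{x}_{m-1}-\mathsf{x}'_m-1$, $j_1=\mathsf{y}_{m-1}-\mathsf{x}_{m-1}$, sample $j_2\in\{0,1\}$ with probability $\mathsf{L}_{-\beta,a_m,\alpha a_m}(i_1,j_1;i_1+j_1-j_2,j_2)$, and set $\mathsf{y}^\dagger_m:=\mathsf{x}'_m+j_2$. For $m=1$, $\mathsf{x}_0=\mathsf{y}_0=+\infty$,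 $i_1=+\infty$ (with $q^{i_1}=0$), and $j_1$ may be taken $0$ or $1$ (the weights do not depend on this choice). Finally $\vec{\mathsf{y}}^{\,BG}$ is obtained from $\vec{\mathsf{y}}$ by applying a further geometric move $\mathbf{G}_\alpha$ with randomness independent of everything above. *)

From HB Require Import structures.
From mathcomp Require Import all_boot all_order all_algebra.
From mathcomp Require Import all_classical all_reals all_analysis.
Set Implicit Arguments. Unset Strict Implicit. Unset Printing Implicit Defensive.
Import Order.TTheory GRing.Theory Num.Theory numFieldNormedType.Exports.
Local Open Scope ring_scope.

Section Defs.
Variable R : realType.

Definition qpoch (q z : R) (k : nat) : R := \prod_(i < k) (1 - z * q ^+ i).
Definition qpoch_inf (q z : R) : R := limn (fun k : nat => qpoch q z k).

(* extended naturals: [Some n] = n, [None] = +oo *)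
Definition qpow (q : R) (g : option nat) : R :=
  if g is Some n then q ^+ n else 0.

(* p_{m,gamma}(j) for m : option nat (None = +oo) and j : int
   (zero outside the support {0..m}, resp. Z_{>=0}) *)
Definition pgeom (q : R) (m : option nat) (gam : R) (j : int) : R :=
  if (j < 0)%R then 0 else
  let n := absz j in
  match m with
  | Some m0 =>
      if (n <= m0)%N then
        gam ^+ n * qpoch q gam (m0 - n) *
        (qpoch q q m0 / (qpoch q q n * qpoch q q (m0 - n)))
      else 0
  | None => gam ^+ n * qpoch_inf q gam / qpoch q q n
  end.

(* vertex weight L_{u,a,nu}(i1,j1;i2,j2), i's in Z_{>=0} u {+oo}, j's in {0,1} *)
Definition ext_conserve (i1 : option nat) (j1 : bool) (i2 : option nat) (j2 : bool) : bool :=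
  match i1, i2 with
  | Some n1, Some n2 => (n1 + j1 == n2 + j2)%N
  | None, None => true
  | _, _ => false
  end.

Definition Lw (q u a nu : R) (i1 : option nat) (j1 : bool) (i2 : option nat) (j2 : bool) : R :=
  if ext_conserve i1 j1 i2 j2 then
    let qg := qpow q i1 in
    match j1, j2 with
    | false, false => (1 - a * u * qg) / (1 - a * u)
    | false, true  => (- (a * u) * (1 - qg)) / (1 - a * u)
    | true,  true  => (nu * qg - a * u) / (1 - a * u)
    | true,  false => (1 - nu * qg) / (1 - a * u)
    end
  else 0.

(* probability of sampling j2 given (i1, j1): L(i1,j1; i1+j1-j2, j2);
   vanishes when i1+j1-j2 < 0 *)
Definition Lsample (q u a nu : R) (i1 : option nat) (j1 j2 : bool) : R :=
  match i1 with
  | None => Lw q u a nu None j1 None j2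
  | Some n => if (j2 <= n + j1)%N then Lw q u a nu (Some n) j1 (Some (n + j1 - j2)%N) j2
              else 0
  end.

(* configuration x : nat -> int, particles indexed 1..L, x_0 = +oo *)
Definition gapx (x : nat -> int) (i : nat) : option nat :=
  if (i <= 1)%N then None else Some (absz (x i.-1 - x i - 1)%R).

(* Bernoulli move: jump indicators t = (b_1,...,b_L), b_i = nth false t i.-1 *)
Definition bit (Lp : nat) (t : Lp.-tuple bool) (i : nat) : bool := nth false t i.-1.

(* probability that particle i jumps (c = true) / stays (c = false),
   given whether particle i-1 has jumped (pj) *)
Definition bstep (q beta : R) (a : nat -> R) (x : nat -> int) (i : nat) (pj c : bool) : R :=
  let r := a i * beta / (1 + a i * beta) in
  let p := if (i == 1%N) || pj then r else (1 - qpow q (gapx x i)) * r in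
  if c then p else 1 - p.

Definition Bprob (q beta : R) (a : nat -> R) (x : nat -> int) (Lp : nat) (t : Lp.-tuple bool) : R :=
  \prod_(1 <= i < Lp.+1) bstep q beta a x i (bit t i.-1) (bit t i).

(* y_i = x_i + b_i ; y_0 = +oo represented by None *)
Definition ypos (x : nat -> int) (Lp : nat) (t : Lp.-tuple bool) (i : nat) : option int :=
  if i == 0%N then None else Some (x i + (bit t i)%:Z).

Definition yfin (x : nat -> int) (Lp : nat) (t : Lp.-tuple bool) (i : nat) : int :=
  x i + (bit t i)%:Z.

(* j_1 = y_{m-1} - x_{m-1}, taken to be 0 when m = 1 *)
Definition j1of (Lp : nat) (t : Lp.-tuple bool) (m : nat) : bool :=
  if (m <= 1)%N then false else bit t m.-1.

(* Joint law of (y_{m-1}, y^dagger_m), conditionally on x, evaluated at (w, v).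
   y_{m-1} in Z u {+oo} (None = +oo).  x'_m = x_m + g with
   g ~ p_{gap_m, a_m alpha}; j2 sampled with L_{-beta,a_m,alpha a_m}(i1,j1;.,j2);
   y^dagger_m = x'_m + j2.  Given v and j2, g = v - j2 - x_m is determined. *)
Definition law_dagger (q alpha beta : R) (a : nat -> R) (x : nat -> int)
    (Lp m : nat) (w : option int) (v : int) : R :=
  \sum_(t : Lp.-tuple bool)
    Bprob q beta a x t * (ypos x t m.-1 == w)%:R *
    \sum_(j2 : bool)
      let xm' := v - j2%:Z in
      let g := xm' - x m in
      let i1 := if (m <= 1)%N then None else Some (absz (x m.-1 - xm' - 1)%R) in
      pgeom q (gapx x m) (a m * alpha) g *
      Lsample q (- beta) (a m) (alpha * a m) i1 (j1of t m) j2.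

Definition gapy (x : nat -> int) (Lp : nat) (t : Lp.-tuple bool) (m : nat) : option nat :=
  if (m <= 1)%N then None else Some (absz (yfin x t m.-1 - yfin x t m - 1)%R).

(* Joint law of (y_{m-1}, y^BG_m), where y^BG_m = y_m + h,
   h ~ p_{y_{m-1}-y_m-1, a_m alpha}. *)
Definition law_BG (q alpha beta : R) (a : nat -> R) (x : nat -> int)
    (Lp m : nat) (w : option int) (v : int) : R :=
  \sum_(t : Lp.-tuple bool)
    Bprob q beta a x t * (ypos x t m.-1 == w)%:R *
    pgeom q (gapy x t m) (a m * alpha) (v - yfin x t m).

End Defs.

From HB Require Import structures.
From mathcomp Require Import all_boot all_order all_algebra.
From mathcomp Require Import all_classical all_reals all_analysis.
From mathcomp Require Import zify ring lra.
Import Order.TTheory GRing.Theory Num.Theory.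
Local Open Scope ring_scope.
Set Implicit Arguments. Unset Strict Implicit. Unset Printing Implicit Defensive.

(* Both laws are sums over the jump vector t of the Bernoulli move, weighted by
   its probability, and they see t only through the jump j1 of particle m-1 and
   the jump of particle m.  The Bernoulli move is sequential, so given the past,
   particle m jumps according to the one-step law bstep; summing that jump out
   reduces the claim to a local identity for each value of j1: mixing the
   q-binomial law of the geometric jump with the vertex weights L gives the same
   result as mixing the Bernoulli step with the q-binomial law of the gap it
   creates.  The local identity is a rational identity between q-Pochhammer
   symbols, checked separately on and off the support. *)

Definition tflip (n k : nat) (t : n.-tuple bool) : n.-tuple bool :=
  [tuple nth false t i (+) (i == k :> nat) | i < n].

Lemma nth_tflip n k (t : n.-tuple bool) j :
  (k < n)%N -> nth false (tflip k t) j = nth false t j (+) (j == k).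
Proof.
move=> kn; case: (ltnP j n) => jn; first by rewrite (nth_mktuple _ _ (Ordinal jn)).
have /negbTE -> : j != k by lia.
by rewrite !nth_default ?size_tuple.
Qed.

Lemma tflipK n k : involutive (@tflip n k).
Proof.
move=> t; apply: eq_from_tnth => i; rewrite !(tnth_nth false) /tflip.
by rewrite !(nth_mktuple _ _ i) -addbA addbb addbF.
Qed.

Lemma bit_tflip n k (t : n.-tuple bool) i :
  (k < n)%N -> bit (tflip k t) i = bit t i (+) (i.-1 == k).
Proof. exact: nth_tflip. Qed.

Lemma sum_tflip (R : nmodType) n k (F : n.-tuple bool -> R) :
  \sum_t F t = \sum_t F (tflip k t).
Proof. exact: (reindex_inj (inv_inj (@tflipK n k))). Qed.

Lemma j1of_tflip n k (t : n.-tuple bool) m :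
  (k < n)%N -> (m <= k.+1)%N -> j1of (tflip k t) m = j1of t m.
Proof.
move=> kn mk; rewrite /j1of; case: ifP => // m1.
by rewrite bit_tflip //; case: eqP => [|_]; [lia | rewrite addbF].
Qed.

Section BernoulliMarkov.
Variables (R : realType) (q beta : R) (a : nat -> R) (x : nat -> int) (Lp m : nat).
Hypothesis hm : (1 <= m <= Lp)%N.

Local Notation B := (bstep q beta a x).

Lemma bstep_false i pj : B i pj false = 1 - B i pj true.
Proof. by []. Qed.

Definition Bprefix (t : Lp.-tuple bool) (n : nat) : R :=
  \prod_(1 <= i < n.+1) B i (bit t i.-1) (bit t i).

Lemma BprefixS t n : Bprefix t n.+1 = Bprefix t n * B n.+1 (bit t n) (bit t n.+1).
Proof. by rewrite /Bprefix big_nat_recr. Qed.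

Lemma Bprefix_tflip t n k : (n <= k < Lp)%N -> Bprefix (tflip k t) n = Bprefix t n.
Proof.
move=> /andP[nk kL]; apply: eq_big_nat => i /andP[i1 i2].
rewrite !bit_tflip //; have /negbTE -> : i.-1.-1 != k by lia.
have /negbTE -> : i.-1 != k by lia.
by rewrite !addbF.
Qed.

Lemma Bprefix_j1of t : Bprefix t m = Bprefix t m.-1 * B m (j1of t m) (bit t m).
Proof.
case/andP: hm => m1 _; rewrite -{1}(prednK m1) BprefixS prednK //.
rewrite /j1of; case: ifP => // m_le1.
have -> : m = 1%N by lia.
by rewrite /bstep.
Qed.

Lemma sum_Bprefix_eq0 (Phi : bool -> bool -> R) :
    (forall c1, \sum_c2 B m c1 c2 * Phi c1 c2 = 0) ->
  forall n, (m <= n <= Lp)%N ->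
  \sum_(t : Lp.-tuple bool) Bprefix t n * Phi (j1of t m) (bit t m) = 0.
Proof.
move=> Phi0; have twice0 (S : R) : S + S = 0 -> S = 0 by lra.
case/andP: hm => m1 mL; elim=> [|n IH] /andP[mn nL]; first by lia.
(* Pair t with the tuple whose jump of particle n.+1 is flipped: the two
   one-step weights add up to 1, or to the local sum Phi0 when n.+1 = m. *)
apply: twice0; rewrite {2}(sum_tflip n) -big_split /=.
have [mn'|nm] : (m <= n)%N \/ n = m.-1 by lia.
- rewrite -[RHS](IH _); last by lia.
  apply: eq_bigr => t _; rewrite !BprefixS Bprefix_tflip ?j1of_tflip; [|lia..].
  rewrite !bit_tflip // eqxx addbT.
  have /negbTE -> : m.-1 != n by lia.
  have /negbTE -> : n.-1 != n by lia.
  by rewrite !addbF; case: (bit t n.+1); rewrite [~~ _]/= bstep_false; ring.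
- rewrite nm (prednK m1); apply: big1 => t _.
  rewrite !Bprefix_j1of Bprefix_tflip ?j1of_tflip ?bit_tflip; [|lia..].
  rewrite eqxx addbT -!mulrA -mulrDr.
  have := Phi0 (j1of t m); rewrite big_bool => loc0.
  by case: (bit t m); rewrite [~~ _]/= ?loc0 1?addrC ?loc0 mulr0.
Qed.

Lemma sum_Bprob_bit (F : bool -> bool -> R) :
  \sum_(t : Lp.-tuple bool) Bprob q beta a x t * F (j1of t m) (bit t m) =
  \sum_(t : Lp.-tuple bool) Bprob q beta a x t *
    \sum_c B m (j1of t m) c * F (j1of t m) c.
Proof.
apply/eqP; rewrite -subr_eq0 -sumrB; apply/eqP.
pose Phi c1 c2 := F c1 c2 - \sum_c B m c1 c * F c1 c.
rewrite -[RHS](@sum_Bprefix_eq0 Phi _ Lp); last by case/andP: hm => _ ->; rewrite leqnn.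
  by apply: eq_bigr => t _; rewrite mulrBr.
by move=> c1; rewrite /Phi !big_bool /=; ring.
Qed.
End BernoulliMarkov.

Section QBinomial.
Variables (R : realType) (q g b : R).
Hypotheses (q0 : 0 < q) (q1 : q < 1) (b0 : 0 < b).

Lemma qpochS z k : qpoch q z k.+1 = qpoch q z k * (1 - z * q ^+ k).
Proof. by rewrite /qpoch big_ord_recr. Qed.

Lemma one_sub_qexpS_neq0 k : 1 - q * q ^+ k != 0.
Proof. by rewrite subr_eq0 eq_sym -exprS pexprn_eq1 ?(ltW q0) //= (lt_eqF q1). Qed.

Lemma qpoch_qq_neq0 k : qpoch q q k != 0.
Proof.
by elim: k => [|k IH]; rewrite ?qpochS ?mulf_neq0 ?one_sub_qexpS_neq0 // /qpoch big_ord0 oner_neq0.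
Qed.

Lemma pgeom_lt0 G (j : int) : j < 0 -> pgeom q G g j = 0.
Proof. by rewrite /pgeom => ->. Qed.

Lemma pgeom_gt G n : (G < n)%N -> pgeom q (Some G) g n%:Z = 0.
Proof. by move=> Gn; rewrite /pgeom /= leqNgt Gn. Qed.

Lemma pgeom_qbinom G n d : G = (n + d)%N ->
  pgeom q (Some G) g n%:Z =
  g ^+ n * qpoch q g d * (qpoch q q (n + d) / (qpoch q q n * qpoch q q d)).
Proof. by move=> ->; rewrite /pgeom /= leq_addr addKn. Qed.

Lemma pgeom_vertex_stay G k :
  pgeom q (Some G) g k * ((1 + b * q ^+ absz (G%:Z - k)) / (1 + b))
  + pgeom q (Some G) g (k - 1) * (b * (1 - q ^+ absz (G%:Z - k + 1)) / (1 + b))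
  = (1 - (1 - q ^+ G) * (b / (1 + b))) * pgeom q (Some G) g k
    + (1 - q ^+ G) * (b / (1 + b)) * pgeom q (Some G.-1) g (k - 1).
Proof.
have b1 : 1 + b != 0 := lt0r_neq0 (addr_gt0 ltr01 b0).
have [k0|/gez0_abs <-] := ltrP k 0.
  by rewrite !pgeom_lt0 //; [ring | lia..].
case: (absz k) => [|n].
  have p0 G' : pgeom q G' g (0%:Z - 1) = 0 by apply: pgeom_lt0.
  by rewrite !p0 subr0 /=; field.
have -> : n.+1%:Z - 1 = n%:Z by lia.
case: (leqP n.+1 G) => [nG|Gn].
  have [d ->] : exists d, G = (n.+1 + d)%N by exists (G - n.+1)%N; lia.
  rewrite (@pgeom_qbinom _ n.+1 d) // (@pgeom_qbinom _ n d.+1); last by lia.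
  rewrite (@pgeom_qbinom _ n d) //.
  have -> : absz ((n.+1 + d)%:Z - n.+1%:Z) = d by lia.
  have -> : absz ((n.+1 + d)%:Z - n.+1%:Z + 1) = d.+1 by lia.
  rewrite !addSn !addnS !qpochS !exprS !exprD.
  by field; rewrite b1 !qpoch_qq_neq0 !one_sub_qexpS_neq0.
rewrite (pgeom_gt Gn) !(mul0r, mulr0, add0r).
have [->|Gn'] : n = G \/ (G < n)%N by lia.
  have -> : absz (G%:Z - G.+1%:Z + 1) = 0%N by lia.
  case: G Gn => [|G] _; first by rewrite !expr0 subrr !(mulr0, mul0r).
  by rewrite succnK (pgeom_gt (ltnSn G)) expr0 subrr !(mulr0, mul0r).
by rewrite !(pgeom_gt (n := n)) ?(mulr0, mul0r) //; lia.
Qed.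

Lemma pgeom_vertex_jump G k :
  pgeom q (Some G) g k * ((1 - g * q ^+ absz (G%:Z - k)) / (1 + b))
  + pgeom q (Some G) g (k - 1) * ((g * q ^+ absz (G%:Z - k + 1) + b) / (1 + b))
  = (1 - b / (1 + b)) * pgeom q (Some G.+1) g k + b / (1 + b) * pgeom q (Some G) g (k - 1).
Proof.
have b1 : 1 + b != 0 := lt0r_neq0 (addr_gt0 ltr01 b0).
have [k0|/gez0_abs <-] := ltrP k 0.
  by rewrite !pgeom_lt0 //; [ring | lia..].
case: (absz k) => [|n].
  have p0 G' : pgeom q G' g (0%:Z - 1) = 0 by apply: pgeom_lt0.
  rewrite !p0 subr0 (@pgeom_qbinom _ 0 G) // (@pgeom_qbinom _ 0 G.+1) //=.
  by rewrite !qpochS; field; rewrite b1 !qpoch_qq_neq0 !one_sub_qexpS_neq0.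
have -> : n.+1%:Z - 1 = n%:Z by lia.
case: (leqP n.+1 G) => [nG|Gn].
  have [d ->] : exists d, G = (n.+1 + d)%N by exists (G - n.+1)%N; lia.
  rewrite (@pgeom_qbinom _ n.+1 d) // (@pgeom_qbinom _ n d.+1); last by lia.
  rewrite (@pgeom_qbinom _ n.+1 d.+1); last by lia.
  have -> : absz ((n.+1 + d)%:Z - n.+1%:Z) = d by lia.
  have -> : absz ((n.+1 + d)%:Z - n.+1%:Z + 1) = d.+1 by lia.
  rewrite !addSn !addnS !qpochS !exprS !exprD.
  by field; rewrite b1 !qpoch_qq_neq0 !one_sub_qexpS_neq0.
rewrite (pgeom_gt Gn) !(mul0r, add0r).
have [->|Gn'] : n = G \/ (G < n)%N by lia.
  rewrite (@pgeom_qbinom _ G 0) ?addn0 // (@pgeom_qbinom _ G.+1 0) ?addn0 //.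
  have -> : absz (G%:Z - G.+1%:Z + 1) = 0%N by lia.
  rewrite !qpochS !exprS.
  by field; rewrite b1 !qpoch_qq_neq0 !one_sub_qexpS_neq0.
by rewrite (pgeom_gt Gn') (pgeom_gt (_ : G.+1 < n.+1)%N) ?(mulr0, mul0r, addr0).
Qed.

End QBinomial.

Lemma Lsample_Some (R : realType) (q u A nu : R) n j1 j2 :
  Lsample q u A nu (Some n) j1 j2 =
  match j1, j2 with
  | false, false => (1 - A * u * q ^+ n) / (1 - A * u)
  | false, true => - (A * u) * (1 - q ^+ n) / (1 - A * u)
  | true, true => (nu * q ^+ n - A * u) / (1 - A * u)
  | true, false => (1 - nu * q ^+ n) / (1 - A * u)
  end.
Proof.
rewrite /Lsample /Lw /ext_conserve /qpow.
case: j1; case: j2; case: n => [|n] //=; rewrite ?expr0 ?subrr ?mulr0 ?mul0r //.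
all: by rewrite ?addn1 ?addn0 ?subn0 ?subn1 /= ?eqxx.
Qed.

Section ConditionalLaws.
Variables (R : realType) (q alpha beta : R) (a : nat -> R) (x : nat -> int) (m : nat).
Variable v : int.

Definition yprev (c1 : bool) : option int :=
  if (m <= 1)%N then None else Some (x m.-1 + c1%:Z).

(* Given the jump c1 of particle m-1 (and c2 of particle m), the probability
   that y^dagger_m, resp. y^BG_m, equals v. *)
Definition dagger_kernel (c1 : bool) : R :=
  \sum_(j2 : bool)
    pgeom q (gapx x m) (a m * alpha) (v - j2%:Z - x m) *
    Lsample q (- beta) (a m) (alpha * a m)
      (if (m <= 1)%N then None else Some (absz (x m.-1 - (v - j2%:Z) - 1)%R)) c1 j2.

Definition BG_kernel (c1 c2 : bool) : R :=
  pgeom q (if (m <= 1)%N then None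
           else Some (absz (x m.-1 + c1%:Z - (x m + c2%:Z) - 1)%R))
    (a m * alpha) (v - (x m + c2%:Z)).

Lemma law_daggerE Lp w : (1 <= m)%N ->
  law_dagger q alpha beta a x Lp m w v =
  \sum_(t : Lp.-tuple bool) Bprob q beta a x t *
    ((yprev (j1of t m) == w)%:R * dagger_kernel (j1of t m)).
Proof.
move=> m1; apply: eq_bigr => t _; rewrite -mulrA; congr (_ * (_ * _)).
by rewrite /ypos /yprev /j1of -subn1 subn_eq0; case: ifP.
Qed.

Lemma law_BGE Lp w : (1 <= m)%N ->
  law_BG q alpha beta a x Lp m w v =
  \sum_(t : Lp.-tuple bool) Bprob q beta a x t *
    ((yprev (j1of t m) == w)%:R * BG_kernel (j1of t m) (bit t m)).
Proof.
move=> m1; apply: eq_bigr => t _; rewrite -mulrA; congr (_ * (_ * _)).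
  by rewrite /ypos /yprev /j1of -subn1 subn_eq0; case: ifP.
by rewrite /BG_kernel /gapy /yfin /j1of; case: ifP.
Qed.

Lemma dagger_kernelE c1 :
  0 < q -> q < 1 -> 0 < a m -> 0 < beta -> ((1 < m)%N -> x m < x m.-1) ->
  dagger_kernel c1 = \sum_c2 bstep q beta a x m c1 c2 * BG_kernel c1 c2.
Proof.
move=> q0 q1 am0 be0 xm; have b0 : 0 < a m * beta := mulr_gt0 am0 be0.
have b1 : 1 + a m * beta != 0 := lt0r_neq0 (addr_gt0 ltr01 b0).
rewrite /dagger_kernel /BG_kernel /bstep !big_bool /=.
set k := v - x m.
have -> : v - 1%:Z - x m = k - 1 by lia.
have -> : v - 0%:Z - x m = k by lia.
have -> : v - (x m + 1%:Z) = k - 1 by lia.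
have -> : v - (x m + 0%:Z) = k by lia.
case: (leqP m 1) => [m_le1|m_gt1].
  rewrite /gapx m_le1 /Lsample /Lw /= !mulrN !mulNr !opprK /=.
  by case: ((m == 1%N) || c1); case: c1; field.
set G := absz (x m.-1 - x m - 1)%R.
have hG : G%:Z = x m.-1 - x m - 1 by have := xm m_gt1; lia.
have -> : gapx x m = Some G by rewrite /gapx leqNgt m_gt1.
have -> : (m == 1%N) = false by apply/negbTE; lia.
have -> : absz (x m.-1 - (v - 1%:Z) - 1)%R = absz (G%:Z - k + 1) by lia.
have -> : absz (x m.-1 - (v - 0%:Z) - 1)%R = absz (G%:Z - k) by lia.
rewrite !Lsample_Some /qpow !mulrN !mulNr !opprK [alpha * a m]mulrC.
case: c1 => /=.
  have -> : absz (x m.-1 + 1%:Z - (x m + 1%:Z) - 1)%R = G by lia.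
  have -> : absz (x m.-1 + 1%:Z - (x m + 0%:Z) - 1)%R = G.+1 by lia.
  by rewrite addrC pgeom_vertex_jump // addrC.
have -> : absz (x m.-1 + 0%:Z - (x m + 0%:Z) - 1)%R = G by lia.
(* For G = 0 this gap is junk, but its weight 1 - q ^+ G vanishes. *)
have -> r : (1 - q ^+ G) * r *
    pgeom q (Some (absz (x m.-1 + 0%:Z - (x m + 1%:Z) - 1)%R)) (a m * alpha) (k - 1)
  = (1 - q ^+ G) * r * pgeom q (Some G.-1) (a m * alpha) (k - 1).
  case: (posnP G) => [->|G_gt0]; first by rewrite expr0 subrr !mul0r.
  by have -> : absz (x m.-1 + 0%:Z - (x m + 1%:Z) - 1)%R = G.-1 by lia.
by rewrite addrC pgeom_vertex_stay // addrC.
Qed.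
End ConditionalLaws.

Unset Implicit Arguments.

Theorem proposition5p10 (R : realType) (q alpha beta : R) (a : nat -> R)
    (Lp : nat) (x : nat -> int) (m : nat) :
  0 < q -> q < 1 ->
  (1 <= Lp)%N ->
  (forall i : nat, (1 <= i <= Lp)%N -> 0 < a i) ->
  0 < alpha -> 0 < beta ->
  (forall i : nat, (1 <= i <= Lp)%N -> alpha * a i < 1) ->
  (forall i : nat, (2 <= i <= Lp)%N -> x i < x i.-1) ->
  (1 <= m <= Lp)%N ->
  forall (w : option int) (v : int),
    law_dagger q alpha beta a x Lp m w v = law_BG q alpha beta a x Lp m w v.
Proof.
move=> q0 q1 _ a_gt0 _ beta0 _ x_decr hm w v.
have m1 : (1 <= m)%N by case/andP: hm.
have am0 : 0 < a m := a_gt0 m hm.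
have x_step : (1 < m)%N -> x m < x m.-1.
  by move=> m_gt1; apply: x_decr; case/andP: hm => _ ->; rewrite m_gt1.
rewrite law_daggerE // law_BGE // (sum_Bprob_bit q beta a x hm
  (fun c1 c2 => (yprev x m c1 == w)%:R * BG_kernel q alpha a x m v c1 c2)).
apply: eq_bigr => t _; rewrite dagger_kernelE // mulr_sumr; congr (_ * _).
by apply: eq_bigr => c _; rewrite mulrCA.
Qed.
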